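(* Let $a,b,e\in\mathbb Z$ with $a\neq0$, $e>0$, such that $h_2(j)=aj^2+bj+e$ satisfies $h_2(j)\ge0$ for all integers $j\ge0$ (so $h_2\in\mathcal H_0$). Then $\operatorname{hdepth}(h_2)\le 13$.
   Context: Let $\mathcal H_0$ denote the set of functions $h:\mathbb Z_{\ge 0}\to\mathbb Z_{\ge 0}$ with $h(0)>0$. For $h\in\mathcal H_0$ and integers $0\le k\le d$, put $\beta_k^d(h)=\sum_{j=0}^k(-1)^{k-j}\binom{d-j}{k-j}h(j)$. The Hilbert depth of $h$ is $\operatorname{hdepth}(h)=\max\{d\in\mathbb Z_{\ge0}:\ \beta_k^d(h)\ge 0\text{ for all }0\le k\le d\}$; this set contains $d=0$ and is known to be bounded above by $\lfloor h(1)/h(0)\rfloor$, so the maximum exists. *)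

From mathcomp Require Import all_boot all_order all_algebra.
Set Implicit Arguments. Unset Strict Implicit. Unset Printing Implicit Defensive.
Import Order.TTheory GRing.Theory Num.Theory.
Local Open Scope ring_scope.

(* h : Z_{>=0} -> Z_{>=0}; we represent values in int and require nonnegativity
   explicitly where needed (membership in H_0). *)
Definition in_H0 (h : nat -> int) : Prop := 0 < h 0%N /\ forall j, 0 <= h j.

Definition beta (h : nat -> int) (d k : nat) : int :=
  \sum_(0 <= j < k.+1) (-1) ^+ (k - j) * ('C(d - j, k - j))%:R * h j.

Definition hdepth_admissible (h : nat -> int) (d : nat) : Prop :=
  forall k : nat, (k <= d)%N -> 0 <= beta h d k.

Definition is_hdepth (h : nat -> int) (n : nat) : Prop :=
  hdepth_admissible h n /\ forall d, hdepth_admissible h d -> (d <= n)%N.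

From mathcomp Require Import all_boot all_order all_algebra.
From mathcomp Require Import zify ring.
Import Order.TTheory GRing.Theory Num.Theory.
Local Open Scope ring_scope.

(* A quadratic that is nonnegative on all of N has positive leading coefficient a.
   For d >= 2 and h = a j^2 + b j + e, clearing the denominators of the binomial
   coefficients gives the identity
     6 beta_3 + 4 (d - 3) beta_2 + (d^2 - 3d - 12) beta_1
       = 4 (9 - d) a - 2 (d^2 - 9d + 6) e,
   in which b cancels.  For d >= 10 the coefficients on the left are nonnegative
   while the right-hand side is negative, so beta_1, beta_2, beta_3 cannot all be
   nonnegative: hdepth h <= 9, which is sharper than the stated bound 13.
   Admissibility is a bounded quantifier, hence decidable, so the maximum exists. *)

Lemma mul2_binom2 (n : nat) : 2 * 'C(n, 2)%:R = n%:R * (n%:R - 1) :> int.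
Proof.
elim: n => [|n IHn] //.
by rewrite binS natrD mulrDr IHn bin1 -natr1; ring.
Qed.

Lemma mul6_binom3 (n : nat) :
  6 * 'C(n, 3)%:R = n%:R * (n%:R - 1) * (n%:R - 2) :> int.
Proof.
elim: n => [|n IHn] //.
have E2 := mul2_binom2 n.
rewrite binS natrD mulrDr IHn -natr1.
have -> : 6 * 'C(n, 2)%:R = 3 * (2 * 'C(n, 2)%:R) :> int by ring.
by rewrite E2; ring.
Qed.

Section BetaSmallIndex.

Variables (h : nat -> int) (d : nat).

Lemma beta0E : beta h d 0 = h 0%N.
Proof. by rewrite /beta unlock /= bin0; ring. Qed.

Lemma beta1E : beta h d 1 = h 1%N - d%:R * h 0%N.
Proof. by rewrite /beta unlock /= !subn0 bin1 bin0; ring. Qed.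

Lemma mul2_beta2E : (0 < d)%N ->
  2 * beta h d 2 = 2 * h 2%N - 2 * (d%:R - 1) * h 1%N + d%:R * (d%:R - 1) * h 0%N.
Proof.
move=> d_gt0; rewrite /beta unlock /= !subSS !subn0 bin1 bin0 natrB //.
by rewrite -mul2_binom2; ring.
Qed.

Lemma mul6_beta3E : (1 < d)%N ->
  6 * beta h d 3 = 6 * h 3%N - 6 * (d%:R - 2) * h 2%N
                   + 3 * (d%:R - 1) * (d%:R - 2) * h 1%N
                   - d%:R * (d%:R - 1) * (d%:R - 2) * h 0%N.
Proof.
move=> d_gt1; have d_ge1 : (1 <= d)%N by exact: ltnW.
rewrite /beta unlock /= !subSS !subn0 bin1 bin0 !natrB //.
have := mul2_binom2 (d - 1); rewrite natrB // => E2.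
set c2 := 'C(d - 1, 2)%:R in E2 *; set c3 := 'C(d, 3)%:R.
transitivity (6 * h 3%N - 6 * (d%:R - 2) * h 2%N + 3 * (2 * c2) * h 1%N
              - (6 * c3) * h 0%N); first by ring.
by rewrite E2 mul6_binom3; ring.
Qed.

End BetaSmallIndex.

Definition quad (a b e : int) (j : nat) : int := a * j%:Z ^+ 2 + b * j%:Z + e.

Lemma quad_lead_coef_gt0 (a b e : int) :
  a != 0 -> (forall j, 0 <= quad a b e j) -> 0 < a.
Proof.
move=> a_neq0 quad_ge0; rewrite lt_neqAle eq_sym a_neq0 /=.
apply/negP => /negP; rewrite -ltNge => a_lt0.
pose j := (`|b| + `|e| + 1)%N.
have := quad_ge0 j; rewrite /quad /j !PoszD !abszE expr2.
have := ler_norm b; have := ler_norm e.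
nia.
Qed.

Lemma beta_quad_combination (a b e : int) (d : nat) : (1 < d)%N ->
  6 * beta (quad a b e) d 3 + 4 * (d%:R - 3) * beta (quad a b e) d 2
    + (d%:R ^+ 2 - 3 * d%:R - 12) * beta (quad a b e) d 1
  = 4 * (9 - d%:R) * a - 2 * (d%:R ^+ 2 - 9 * d%:R + 6) * e.
Proof.
move=> d_gt1.
have -> : 4 * (d%:R - 3) * beta (quad a b e) d 2
          = 2 * (d%:R - 3) * (2 * beta (quad a b e) d 2) by ring.
by rewrite mul2_beta2E 1?ltnW // mul6_beta3E // beta1E /quad; ring.
Qed.

Lemma quad_hdepth_admissible_le9 (a b e : int) (d : nat) : 0 < a -> 0 < e ->
  hdepth_admissible (quad a b e) d -> (d <= 9)%N.
Proof.
move=> a_gt0 e_gt0 adm; rewrite leqNgt; apply/negP => d_gt9.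
have d_ge3 : (3 <= d)%N by apply: leq_trans d_gt9.
have := beta_quad_combination a b e d (ltnW d_ge3).
have := adm 1%N (ltnW (ltnW d_ge3)); have := adm 2%N (ltnW d_ge3); have := adm 3%N d_ge3.
have : (10 <= d%:R :> int) by rewrite ler_nat.
move: (d%:R : int) => n; rewrite expr2.
nia.
Qed.

Lemma hdepth_admissibleP (h : nat -> int) (d : nat) :
  reflect (hdepth_admissible h d) [forall k : 'I_d.+1, 0 <= beta h d k].
Proof.
apply: (iffP forallP) => [adm k k_le_d | adm k]; last exact: adm _ (ltn_ord k).
exact: (adm (Ordinal (k_le_d : (k < d.+1)%N))).
Qed.

Lemma is_hdepth_exists {h : nat -> int} {M : nat} : 0 <= h 0%N ->
  (forall d, hdepth_admissible h d -> (d <= M)%N) ->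
  exists2 n, is_hdepth h n & (n <= M)%N.
Proof.
move=> h0_ge0 bounded.
have adm0 : hdepth_admissible h 0 by move=> k; rewrite leqn0 => /eqP ->; rewrite beta0E.
have ex_adm : exists d, [forall k : 'I_d.+1, 0 <= beta h d k].
  by exists 0%N; apply/hdepth_admissibleP.
have ub_adm d : [forall k : 'I_d.+1, 0 <= beta h d k] -> (d <= M)%N.
  by move/hdepth_admissibleP; exact: bounded.
case: (ex_maxnP ex_adm ub_adm) => n /hdepth_admissibleP adm_n max_n.
exists n; last exact: bounded.
by split=> // d /hdepth_admissibleP; exact: max_n.
Qed.

Theorem corollary2p10 (a b e : int) :
  a != 0 -> 0 < e ->
  (forall j : nat, 0 <= a * (j%:Z) ^+ 2 + b * j%:Z + e) ->
  in_H0 (fun j => a * (j%:Z) ^+ 2 + b * j%:Z + e) /\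
  exists n : nat,
    is_hdepth (fun j => a * (j%:Z) ^+ 2 + b * j%:Z + e) n /\ (n <= 13)%N.
Proof.
move=> a_neq0 e_gt0 quad_ge0.
change (in_H0 (quad a b e) /\ exists n, is_hdepth (quad a b e) n /\ (n <= 13)%N).
have a_gt0 : 0 < a := quad_lead_coef_gt0 a b e a_neq0 quad_ge0.
have quad0 : quad a b e 0 = e by rewrite /quad expr0n /= !mulr0 !add0r.
split; first by split=> [|j]; rewrite ?quad0 ?quad_ge0.
have quad0_ge0 : 0 <= quad a b e 0 by rewrite quad0; exact: ltW.
have [n depth_n n_le9] := is_hdepth_exists (M := 9) quad0_ge0
  (fun d => quad_hdepth_admissible_le9 a b e d a_gt0 e_gt0).
by exists n; split; last exact: (leq_trans n_le9).
Qed.
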